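(* Let $D=\{(x^i,y^i)\}_{i=1}^n$ be a training set and $JJ=\{JJ_{x^i}\}_{i=1}^n$ a collection of substructure sets such that $D$ is linearly separable with respect to $JJ$ with margin $\delta^{JJ}>0$, and let $R^{JJ}$ be the mixed assignment radius of $D$ with respect to $JJ$. Run the SWVP algorithm on $D$ with these substructure sets, and suppose that at every update the weights $\gamma$ returned by $\textsc{SetGamma}$ satisfy the $\gamma$ selection conditions (1) and (2) with respect to the current weight vector. Then the total number $t$ of updates made by SWVP satisfies $$t\le \frac{(R^{JJ})^2}{(\delta^{JJ})^2}.$$ In particular, SWVP terminates (converges to a parameter vector making no further updates on $D$).
   Context: Structured prediction setting: for each input $x$ the output space is $\mathcal{Y}(x)=D_Y^{L_x}$ (vectors of length $L_x$ over a finite domain $D_Y$), and a feature map $\phi(x,y')\in\mathbb{R}^d$ is given for $y'\in\mathcal{Y}(x)$. Write $\Delta\phi(x,y,z)=\phi(x,y)-\phi(x,z)$ and $[n]=\{1,\dots,n\}$. The training set is $D=\{(x^i,y^i)\}_{i=1}^n$ with $y^i\in\mathcal{Y}(x^i)$. Mixed assignment: for $y^*,y\in\mathcal{Y}(x)$ and $J\subseteq[L_x]$, $m^J(y^*,y)\in\mathcal{Y}(x)$ has $k$-th coordinate $y^*_k$ if $k\in J$ and $y_k$ otherwise. For each training example a substructure set $JJ_{x^i}\subseteq 2^{[L_{x^i}]}$ is fixed. SWVP algorithm: initialize $\mathbf{w}=0$; repeatedly cycle through the examples $(x,y)\in D$; for each, compute $y^*=\arg\max_{y'\in\mathcal{Y}(x)}\mathbf{w}\cdot\phi(x,y')$.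 If $y^*\ne y$, write $m^J=m^J(y^*,y)$, let $I=\{J\in JJ_x: m^J\neq y\}$, $I^v=\{J\in I:\mathbf{w}\cdot\Delta\phi(x,y,m^J)\le 0\}$, $I^{nv}=\{J\in I:\mathbf{w}\cdot\Delta\phi(x,y,m^J)>0\}$ (so $I=I^v\cup I^{nv}$), obtain weights $\gamma(m^J)$, $J\in I$, from a procedure $\textsc{SetGamma}$, and perform the update $\mathbf{w}\leftarrow\mathbf{w}+\sum_{J\in I}\gamma(m^J)\Delta\phi(x,y,m^J)$. Stop when a full pass makes no update. $\gamma$ selection conditions (for the current $\mathbf{w}$, before the update): (1) $\gamma(m^J)\ge0$ for all $J\in I$ and $\sum_{J\in I}\gamma(m^J)=1$; (2) $\mathbf{w}\cdot\sum_{J\in I}\gamma(m^J)\Delta\phi(x,y,m^J)\le 0$. $D$ is linearly separable with respect to $JJ$ with margin $\delta^{JJ}>0$ if there is $\mathbf{u}\in\mathbb{R}^d$ with $\|\mathbf{u}\|_2=1$ such that $\mathbf{u}\cdot\Delta\phi(x^i,y^i,m^J(z,y^i))\ge\delta^{JJ}$ for all $i$, all $z\in\mathcal{Y}(x^i)$ and all $J\in JJ_{x^i}$ with $m^J(z,y^i)\ne y^i$. The mixed assignment radius with respect to $JJ$ is a constant $R^{JJ}$ such that $\|\Delta\phi(x^i,y^i,m^J(z,y^i))\|\le R^{JJ}$ for all $i$, $z\in\mathcal{Y}(x^i)$, $J\in JJ_{x^i}$. *)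

From HB Require Import structures.
From mathcomp Require Import all_boot all_order all_algebra.
Set Implicit Arguments. Unset Strict Implicit. Unset Printing Implicit Defensive.
Import Order.TTheory GRing.Theory Num.Theory.
Local Open Scope ring_scope.

Definition dot (R : rcfType) (d : nat) (u v : 'rV[R]_d) : R :=
  \sum_(j < d) u 0 j * v 0 j.
Definition norm2 (R : rcfType) (d : nat) (u : 'rV[R]_d) : R :=
  Num.sqrt (dot u u).

(* Output space Y(x) = D_Y^{L_x}, represented as finite functions 'I_(L x) -> DY *)
Definition outT (X : Type) (DY : finType) (L : X -> nat) (x : X) : finType :=
  {ffun 'I_(L x) -> DY}.

Definition mix (DY : finType) (m : nat) (J : {set 'I_m})
  (ystar y : {ffun 'I_m -> DY}) : {ffun 'I_m -> DY} :=
  [ffun k => if k \in J then ystar k else y k].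

Definition dphi (R : rcfType) (d : nat) (X : Type) (DY : finType) (L : X -> nat)
  (phi : forall x : X, outT DY L x -> 'rV[R]_d) (x : X) (y z : outT DY L x)
  : 'rV[R]_d := phi x y - phi x z.

Definition Iset (DY : finType) (m : nat) (JJx : {set {set 'I_m}})
  (ystar y : {ffun 'I_m -> DY}) : {set {set 'I_m}} :=
  [set J in JJx | mix J ystar y != y].

Definition Iv (R : rcfType) (d : nat) (X : Type) (DY : finType) (L : X -> nat)
  (phi : forall x : X, outT DY L x -> 'rV[R]_d) (w : 'rV[R]_d) (x : X)
  (JJx : {set {set 'I_(L x)}}) (ystar y : outT DY L x) : {set {set 'I_(L x)}} :=
  [set J in Iset JJx ystar y | dot w (dphi phi y (mix J ystar y)) <= 0].
Definition Inv (R : rcfType) (d : nat) (X : Type) (DY : finType) (L : X -> nat)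
  (phi : forall x : X, outT DY L x -> 'rV[R]_d) (w : 'rV[R]_d) (x : X)
  (JJx : {set {set 'I_(L x)}}) (ystar y : outT DY L x) : {set {set 'I_(L x)}} :=
  [set J in Iset JJx ystar y | 0 < dot w (dphi phi y (mix J ystar y))].

Definition upd_dir (R : rcfType) (d : nat) (X : Type) (DY : finType) (L : X -> nat)
  (phi : forall x : X, outT DY L x -> 'rV[R]_d) (x : X)
  (JJx : {set {set 'I_(L x)}}) (ystar y : outT DY L x)
  (gamma : {set 'I_(L x)} -> R) : 'rV[R]_d :=
  \sum_(J in Iset JJx ystar y) gamma J *: dphi phi y (mix J ystar y).

Definition gamma_ok (R : rcfType) (d : nat) (X : Type) (DY : finType) (L : X -> nat)
  (phi : forall x : X, outT DY L x -> 'rV[R]_d) (w : 'rV[R]_d) (x : X)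
  (JJx : {set {set 'I_(L x)}}) (ystar y : outT DY L x)
  (gamma : {set 'I_(L x)} -> R) : Prop :=
  [/\ (forall J, J \in Iset JJx ystar y -> 0 <= gamma J),
      \sum_(J in Iset JJx ystar y) gamma J = 1 &
      dot w (upd_dir phi JJx ystar y gamma) <= 0].

Definition swvp_step (R : rcfType) (d : nat) (X : Type) (DY : finType) (L : X -> nat)
  (phi : forall x : X, outT DY L x -> 'rV[R]_d) (w : 'rV[R]_d) (x : X)
  (JJx : {set {set 'I_(L x)}}) (y : outT DY L x) (upd : bool) (w' : 'rV[R]_d)
  : Prop :=
  exists ystar : outT DY L x,
    (forall y' : outT DY L x, dot w (phi x y') <= dot w (phi x ystar)) /\
    (if ystar == y then upd = false /\ w' = w
     else upd = true /\
          exists gamma : {set 'I_(L x)} -> R,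
            gamma_ok phi w JJx ystar y gamma /\
            w' = w + upd_dir phi JJx ystar y gamma).

(* A run of SWVP for K example visits: w 0 = 0, the k-th visit is to example
   number (k mod n), cycling through D; w k is the weight before visit k and
   upd k records whether visit k made an update. The algorithm has not stopped
   before visit K: every complete pass (visits p*n .. p*n+n-1) lying before K
   made at least one update. *)
Definition swvp_run (R : rcfType) (d : nat) (X : Type) (DY : finType) (L : X -> nat)
  (phi : forall x : X, outT DY L x -> 'rV[R]_d) (n : nat)
  (xs : 'I_n -> X) (ys : forall i : 'I_n, outT DY L (xs i))
  (JJ : forall i : 'I_n, {set {set 'I_(L (xs i))}})
  (idx : nat -> 'I_n) (w : nat -> 'rV[R]_d) (upd : nat -> bool) (K : nat) : Prop :=
  [/\ (forall k, val (idx k) = (k %% n)%N),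
      w 0%N = 0,
      (forall k, (k < K)%N ->
         swvp_step phi (w k) (JJ (idx k)) (ys (idx k)) (upd k) (w k.+1)) &
      (forall p, ((p.+1 * n) <= K)%N ->
         exists2 k, (p * n <= k < p.+1 * n)%N & upd k)].

Definition num_updates (upd : nat -> bool) (K : nat) : nat :=
  (\sum_(k < K) upd k)%N.

(** Novikoff's perceptron argument, applied to the convex combinations of
    mixed-assignment feature differences used by SWVP.  Fix a unit separator
    [u].  Each update direction is a convex combination of vectors having
    margin at least [delta] along [u] and norm at most [R^JJ], so it has the
    same two properties; by selection condition (2) it also makes a
    non-positive angle with the current weight.  After [t] updates therefore
    [t delta <= u . w <= |w|] and [|w|^2 <= t (R^JJ)^2], whence
    [t^2 delta^2 <= t (R^JJ)^2]. *)

From HB Require Import structures.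
From mathcomp Require Import all_boot all_order all_algebra.
From mathcomp Require Import ring lra.
Import Order.TTheory GRing.Theory Num.Theory.
Local Open Scope ring_scope.

Section EuclideanSpace.
Variables (R : rcfType) (d : nat).
Implicit Types (a b v w D : 'rV[R]_d) (c r : R).

Lemma dotC a b : dot a b = dot b a.
Proof. by apply: eq_bigr => j _; rewrite mulrC. Qed.

Lemma dotDl a b v : dot (a + b) v = dot a v + dot b v.
Proof. by rewrite /dot -big_split; apply: eq_bigr => j _; rewrite mxE mulrDl. Qed.

Lemma dotDr v a b : dot v (a + b) = dot v a + dot v b.
Proof. by rewrite dotC dotDl !(dotC v). Qed.

Lemma dotZl c a v : dot (c *: a) v = c * dot a v.
Proof. by rewrite /dot mulr_sumr; apply: eq_bigr => j _; rewrite mxE mulrA. Qed.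

Lemma dotZr c v a : dot v (c *: a) = c * dot v a.
Proof. by rewrite dotC dotZl dotC. Qed.

Lemma dotNl a v : dot (- a) v = - dot a v.
Proof. by rewrite -scaleN1r dotZl mulN1r. Qed.

Lemma dotNr v a : dot v (- a) = - dot v a.
Proof. by rewrite -scaleN1r dotZr mulN1r. Qed.

Lemma dot0l v : dot 0 v = 0.
Proof. by rewrite /dot big1 // => j _; rewrite mxE mul0r. Qed.

Lemma dot0r v : dot v 0 = 0.
Proof. by rewrite dotC dot0l. Qed.

Lemma dot_suml (I : finType) (P : pred I) (F : I -> 'rV[R]_d) v :
  dot (\sum_(i | P i) F i) v = \sum_(i | P i) dot (F i) v.
Proof. by elim/big_rec2: _ => [|i x y _ <-]; rewrite ?dot0l ?dotDl. Qed.

Lemma dot_self_ge0 a : 0 <= dot a a.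
Proof. by apply: sumr_ge0 => j _; rewrite -expr2 sqr_ge0. Qed.

Lemma norm2_ge0 a : 0 <= norm2 a.
Proof. exact: sqrtr_ge0. Qed.

Lemma sqr_norm2 a : norm2 a ^+ 2 = dot a a.
Proof. by rewrite sqr_sqrtr // dot_self_ge0. Qed.

Lemma norm2_eq0_dotl a v : norm2 a = 0 -> dot a v = 0.
Proof.
move=> /eqP; rewrite sqrtr_eq0 => aa_le0.
have /eqP aa0 : dot a a == 0 by rewrite eq_le aa_le0 dot_self_ge0.
have sqr_ge0j j : true -> 0 <= a 0 j * a 0 j by rewrite -expr2 sqr_ge0.
rewrite /dot big1 // => j _.
have /eqP := @psumr_eq0P _ _ _ _ sqr_ge0j aa0 j isT.
by rewrite mulf_eq0 orbb => /eqP ->; rewrite mul0r.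
Qed.

Lemma dot_le_norm2M a b : dot a b <= norm2 a * norm2 b.
Proof.
have [a0|a_neq0] := eqVneq (norm2 a) 0.
  by rewrite norm2_eq0_dotl // a0 mul0r.
have [b0|b_neq0] := eqVneq (norm2 b) 0.
  by rewrite dotC norm2_eq0_dotl // b0 mulr0.
set na := norm2 a; set nb := norm2 b.
have na_gt0 : 0 < na by rewrite lt_def a_neq0 norm2_ge0.
have nb_gt0 : 0 < nb by rewrite lt_def b_neq0 norm2_ge0.
have := dot_self_ge0 (nb *: a - na *: b).
rewrite dotDl !dotDr !dotNl !dotNr !dotZl !dotZr.
rewrite -(sqr_norm2 a) -(sqr_norm2 b) -/na -/nb (dotC b a) => expanded.
have : 0 <= (2 * na * nb) * (na * nb - dot a b).
  by apply: (le_trans expanded); rewrite le_eqVlt; apply/orP; left; apply/eqP; ring.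
by rewrite pmulr_rge0 ?mulr_gt0 // subr_ge0.
Qed.

Lemma norm2D_le a b : norm2 (a + b) <= norm2 a + norm2 b.
Proof.
rewrite -(ler_pXn2r (_ : 0 < 2)%N) ?nnegrE ?addr_ge0 ?norm2_ge0 //.
rewrite sqr_norm2 dotDl !dotDr (dotC b a) sqrrD !sqr_norm2.
have := dot_le_norm2M a b; lra.
Qed.

Lemma norm2Z c a : 0 <= c -> norm2 (c *: a) = c * norm2 a.
Proof.
move=> c_ge0; rewrite /norm2 dotZl dotZr mulrA -expr2 sqrtrM ?sqr_ge0 //.
by rewrite sqrtr_sqr ger0_norm.
Qed.

Lemma norm2_sum_le (I : finType) (P : pred I) (F : I -> 'rV[R]_d) :
  norm2 (\sum_(i | P i) F i) <= \sum_(i | P i) norm2 (F i).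
Proof.
elim/big_rec2: _ => [|i x y _ IH]; first by rewrite /norm2 dot0l sqrtr0.
exact: le_trans (norm2D_le _ _) (lerD _ IH).
Qed.

Section ConvexCombination.
Variables (I : finType) (P : pred I) (gamma : I -> R) (F : I -> 'rV[R]_d).
Hypotheses (gamma_ge0 : forall i, P i -> 0 <= gamma i)
           (gamma_sum1 : \sum_(i | P i) gamma i = 1).

Lemma dot_convex_ge u c :
  (forall i, P i -> c <= dot u (F i)) ->
  c <= dot u (\sum_(i | P i) gamma i *: F i).
Proof.
move=> c_le; rewrite dotC dot_suml.
rewrite -[c]mul1r -gamma_sum1 mulr_suml; apply: ler_sum => i Pi.
by rewrite dotZl dotC ler_wpM2l ?gamma_ge0 ?c_le.
Qed.

Lemma norm2_convex_le r :
  (forall i, P i -> norm2 (F i) <= r) ->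
  norm2 (\sum_(i | P i) gamma i *: F i) <= r.
Proof.
move=> le_r; apply: le_trans (norm2_sum_le _ _ _) _.
rewrite -[r]mul1r -gamma_sum1 mulr_suml; apply: ler_sum => i Pi.
by rewrite norm2Z ?ler_wpM2l ?gamma_ge0 ?le_r.
Qed.

End ConvexCombination.

Lemma dot_self_addr_le w D r :
  dot w D <= 0 -> norm2 D <= r -> dot (w + D) (w + D) <= dot w w + r ^+ 2.
Proof.
move=> wD_le0 D_le_r.
have DD_le : dot D D <= r ^+ 2.
  by rewrite -sqr_norm2 ler_pM // norm2_ge0.
rewrite dotDl !dotDr (dotC D w); lra.
Qed.

End EuclideanSpace.

Lemma mistake_bound (R : realFieldType) (t delta r s : R) :
  0 <= t -> 0 < delta -> t * delta <= s -> s ^+ 2 <= t * r ^+ 2 ->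
  t <= r ^+ 2 / delta ^+ 2.
Proof.
move=> t_ge0 delta_gt0 td_le_s s_le; rewrite ler_pdivlMr ?exprn_gt0 //.
have [->|t_neq0] := eqVneq t 0; first by rewrite mul0r sqr_ge0.
have t_gt0 : 0 < t by rewrite lt_def t_neq0 t_ge0.
have td_ge0 : 0 <= t * delta by rewrite mulr_ge0 // ltW.
have : (t * delta) ^+ 2 <= s ^+ 2.
  by rewrite ler_pXn2r ?nnegrE // (le_trans td_ge0).
rewrite -(ler_pM2l t_gt0); nra.
Qed.

Section SWVP.
Local Set Implicit Arguments.
Local Unset Strict Implicit.
Variables (R : rcfType) (d : nat) (X : Type) (DY : finType) (L : X -> nat).
Variables (phi : forall x : X, outT DY L x -> 'rV[R]_d) (n : nat).
Variables (xs : 'I_n -> X) (ys : forall i : 'I_n, outT DY L (xs i)).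
Variables (JJ : forall i : 'I_n, {set {set 'I_(L (xs i))}}).
Variables (u : 'rV[R]_d) (delta RJJ : R).
Hypothesis margin_u : forall (i : 'I_n) (z : outT DY L (xs i)) J,
  J \in JJ i -> mix J z (ys i) != ys i ->
  delta <= dot u (dphi phi (ys i) (mix J z (ys i))).
Hypothesis radius : forall (i : 'I_n) (z : outT DY L (xs i)) J,
  J \in JJ i -> norm2 (dphi phi (ys i) (mix J z (ys i))) <= RJJ.

Lemma swvp_step_progress (i : 'I_n) w (b : bool) w' :
  swvp_step phi w (JJ i) (ys i) b w' ->
  dot u w + b%:R * delta <= dot u w' /\
  dot w' w' <= dot w w + b%:R * RJJ ^+ 2.
Proof.
case=> ystar [_]; case: eqP => [_ [-> ->] | _].
  by rewrite !mul0r !addr0.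
case=> -> [gamma [[gamma_ge0 gamma_sum1 w_dir] ->]].
have IsetP J : J \in Iset (JJ i) ystar (ys i) ->
    J \in JJ i /\ mix J ystar (ys i) != ys i.
  by rewrite inE => /andP.
rewrite !mul1r dotDr; split.
  apply: lerD => //; apply: dot_convex_ge => // J /IsetP[JJi mixJ_neq].
  exact: margin_u.
apply: dot_self_addr_le => //; apply: norm2_convex_le => // J /IsetP[JJi _].
exact: radius.
Qed.

Lemma swvp_run_invariant idx w upd K :
  swvp_run phi ys JJ idx w upd K -> forall k, (k <= K)%N ->
  (num_updates upd k)%:R * delta <= dot u (w k) /\
  dot (w k) (w k) <= (num_updates upd k)%:R * RJJ ^+ 2.
Proof.
case=> _ w0 step _; elim=> [|k IH] k_le_K.
  by rewrite /num_updates big_ord0 w0 dot0r dot0l !mul0r.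
have [margin_k norm_k] := IH (ltnW k_le_K).
have [margin_step norm_step] := swvp_step_progress (step k k_le_K).
rewrite /num_updates big_ord_recr /= -/(num_updates upd k) natrD !mulrDl.
split; lra.
Qed.

End SWVP.

Theorem theorem1 (R : rcfType) (d : nat) (X : Type) (DY : finType) (L : X -> nat)
  (phi : forall x : X, outT DY L x -> 'rV[R]_d) (n : nat)
  (xs : 'I_n -> X) (ys : forall i : 'I_n, outT DY L (xs i))
  (JJ : forall i : 'I_n, {set {set 'I_(L (xs i))}})
  (delta RJJ : R)
  (hdelta : 0 < delta)
  (hsep : exists u : 'rV[R]_d, norm2 u = 1 /\
     forall (i : 'I_n) (z : outT DY L (xs i)) (J : {set 'I_(L (xs i))}),
       J \in JJ i -> mix J z (ys i) != ys i ->
       delta <= dot u (dphi phi (ys i) (mix J z (ys i))))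
  (hrad : forall (i : 'I_n) (z : outT DY L (xs i)) (J : {set 'I_(L (xs i))}),
       J \in JJ i -> norm2 (dphi phi (ys i) (mix J z (ys i))) <= RJJ)
  (idx : nat -> 'I_n) (w : nat -> 'rV[R]_d) (upd : nat -> bool) (K : nat)
  (hrun : swvp_run phi ys JJ idx w upd K) :
  (num_updates upd K)%:R <= RJJ ^+ 2 / delta ^+ 2.
Proof.
have [u [u_unit margin_u]] := hsep.
have [margin_K norm_K] := swvp_run_invariant margin_u hrad hrun (leqnn K).
have margin_le_norm : dot u (w K) <= norm2 (w K).
  by rewrite -[norm2 (w K)]mul1r -u_unit dot_le_norm2M.
apply: mistake_bound (ler0n _ _) hdelta (le_trans margin_K margin_le_norm) _.
by rewrite sqr_norm2.
Qed.
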